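(* Let $0\le k,l\le N$ be integers and $a,b,c,d,q$ generic. Then $$R_k^l(a,b,c,d;N;q)=\sum_{P}\ \prod_{\text{early right}}\frac{(1-q^{x+2y}ad)(1-q^{x}a/d)}{(1-q^{x+y}cd)(1-q^{x-y}c/d)}\prod_{\text{early up}}\frac{(1-q^{2x+y}ac)(1-q^{y}a/c)}{(1-q^{x+y}cd)(1-q^{y-x}d/c)}$$ $$\times\prod_{\text{late right}}\frac{(1-q^{x+2y-k}bd)(1-q^{x-k}b/d)}{(1-q^{x+y}cd)(1-q^{x-y}c/d)}\prod_{\text{late up}}\frac{(1-q^{2x+y-k}bc)(1-q^{y-k}b/c)}{(1-q^{x+y}cd)(1-q^{y-x}d/c)},$$ where the sum is over all lattice paths $P$ from $(0,0)$ to $(l,N-l)$ with unit steps right $(1,0)$ or up $(0,1)$; the products run over the steps of $P$, the first $k$ steps being called ''early'' and the remaining $N-k$ ''late''; and in each factor $(x,y)$ is the starting point of the corresponding step.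
   Context: $h_k(x;a)=\prod_{j=0}^{k-1}(1-axq^j+a^2q^{2j})$. For generic parameters, $R_k^l(a,b,c,d;N;q)$ are the unique coefficients with $h_k(x;a)h_{N-k}(x;b)=\sum_{l=0}^N R_k^l(a,b,c,d;N;q)\,h_l(x;c)h_{N-l}(x;d)$ as polynomials in $x$. *)

From HB Require Import structures.
From mathcomp Require Import all_boot all_order all_algebra.
Set Implicit Arguments. Unset Strict Implicit. Unset Printing Implicit Defensive.
Import Order.TTheory GRing.Theory Num.Theory.
Local Open Scope ring_scope.

Section Defs.
Variable F : fieldType.

Definition hpoly (q a : F) (k : nat) : {poly F} :=
  \prod_(j < k) (1 - (a * q ^+ j) *: 'X + (a ^+ 2 * q ^+ (2 * j))%:P).

Definition expansion (q c d : F) (N : nat) (r : nat -> F) : {poly F} :=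
  \sum_(l < N.+1) r l *: (hpoly q c l * hpoly q d (N - l)).

Definition is_R_coeffs (q a b c d : F) (k N : nat) (r : nat -> F) : Prop :=
  hpoly q a k * hpoly q b (N - k) = expansion q c d N r.

(* A lattice path from (0,0) with N unit steps is a N-tuple of booleans:
   true = right step (1,0), false = up step (0,1).  It ends at (l, N-l) iff it has exactly l right steps. *)
Definition step_x (N : nat) (p : N.-tuple bool) (i : nat) : nat :=
  count id (take i p).
Definition step_y (N : nat) (p : N.-tuple bool) (i : nat) : nat :=
  i - step_x p i.

Definition qz (q : F) (z : int) : F := q ^ z.

Definition step_weight (q a b c d : F) (k : nat) (early right : bool)
    (x y : nat) : F :=
  let X : int := x%:Z in let Y : int := y%:Z in let K : int := k%:Z in
  if right then
    (if early then
       (1 - qz q (X + 2%:Z * Y) * a * d) * (1 - qz q X * a / d)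
     else
       (1 - qz q (X + 2%:Z * Y - K) * b * d) * (1 - qz q (X - K) * b / d))
    / ((1 - qz q (X + Y) * c * d) * (1 - qz q (X - Y) * c / d))
  else
    (if early then
       (1 - qz q (2%:Z * X + Y) * a * c) * (1 - qz q Y * a / c)
     else
       (1 - qz q (2%:Z * X + Y - K) * b * c) * (1 - qz q (Y - K) * b / c))
    / ((1 - qz q (X + Y) * c * d) * (1 - qz q (Y - X) * d / c)).

Definition path_weight (q a b c d : F) (k N : nat) (p : N.-tuple bool) : F :=
  \prod_(i < N) step_weight q a b c d k (i < k)%N (tnth p i)
                  (step_x p i) (step_y p i).

Definition path_sum (q a b c d : F) (k N l : nat) : F :=
  \sum_(p : N.-tuple bool | count id p == l) path_weight q a b c d k p.

End Defs.

From HB Require Import structures.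
From mathcomp Require Import all_boot all_order all_algebra.
From mathcomp Require Import ring.
Import Order.TTheory GRing.Theory Num.Theory.
Local Open Scope ring_scope.
Set Implicit Arguments. Unset Strict Implicit.

(* Each factor of h_k(x;a) h_{N-k}(x;b) has the shape 1 - e q^i x + e^2 q^2i,
   with e = a for the first k factors and e = b q^-k for the others.  Such a
   factor with i = x + y splits as a combination of the (x+1)-st factor of
   h(.;c) and the (y+1)-st factor of h(.;d), with coefficients the right and
   up step weights at (x,y).  Multiplying the factors in and splitting one at
   a time thus expands the product over all lattice paths, the endpoint
   (l, N-l) of a path recording which term h_l(x;c) h_{N-l}(x;d) it feeds.
   Uniqueness of the coefficients then identifies R_k^l with the path sum. *)

Section Splitting.
Variable F : fieldType.

Definition hfactor (q u : F) (i : nat) : {poly F} :=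
  1 - (u * q ^+ i) *: 'X + (u ^+ 2 * q ^+ (2 * i))%:P.

Lemma hpolyS (q u : F) (n : nat) : hpoly q u n.+1 = hpoly q u n * hfactor q u n.
Proof. by rewrite /hpoly big_ord_recr. Qed.

(* The step weights written with Q = q^x and P = q^y. *)
Definition split_weight (Q P e c d : F) (right : bool) : F :=
  if right then (1 - Q * P ^+ 2 * e * d) * (1 - Q * e / d)
                / ((1 - Q * P * c * d) * (1 - Q / P * c / d))
  else (1 - Q ^+ 2 * P * e * c) * (1 - P * e / c)
         / ((1 - Q * P * c * d) * (1 - P / Q * d / c)).

Lemma split_weight_coefs (Q P e c d : F) :
    Q != 0 -> P != 0 -> c != 0 -> d != 0 ->
    1 - Q * P * c * d != 0 -> 1 - Q / P * c / d != 0 -> 1 - P / Q * d / c != 0 ->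
  let wr := split_weight Q P e c d true in
  let wu := split_weight Q P e c d false in
  e * (Q * P) = wr * (c * Q) + wu * (d * P) /\
  e ^+ 2 * (Q ^+ 2 * P ^+ 2) = wr + wu + wr * (c ^+ 2 * Q ^+ 2) + wu * (d ^+ 2 * P ^+ 2) - 1.
Proof.
move=> hQ hP hc hd hcd hcd' hdc wr wu; rewrite {}/wr {}/wu /split_weight.
have hPQ : P * d - Q * c != 0.
  move: hcd'; rewrite (_ : 1 - Q / P * c / d = (P * d - Q * c) / (P * d)).
    by rewrite mulf_eq0 negb_or => /andP[].
  by field; rewrite hP hd.
have hQP : Q * c - P * d != 0 by rewrite -opprB oppr_eq0.
by split; field; rewrite hPQ hQP hcd hc hd hQ hP.
Qed.

Variables (q c d : F).
Hypotheses (hq : q != 0) (hc : c != 0) (hd : d != 0).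

Definition denoms_neq0 (x y : nat) : Prop :=
  [/\ 1 - q ^+ x * q ^+ y * c * d != 0, 1 - q ^+ x / q ^+ y * c / d != 0
    & 1 - q ^+ y / q ^+ x * d / c != 0].

Definition lattice_weight (e : F) (right : bool) (x y : nat) : F :=
  split_weight (q ^+ x) (q ^+ y) e c d right.

Lemma hfactor_split (e : F) (x y : nat) : denoms_neq0 x y ->
  hfactor q e (x + y) = (lattice_weight e true x y)%:P * hfactor q c x
                        + (lattice_weight e false x y)%:P * hfactor q d y.
Proof.
move=> [h1 h2 h3].
have hqn n : q ^+ n != 0 by exact: expf_neq0.
have [E1 E2] := split_weight_coefs e (hqn x) (hqn y) hc hd h1 h2 h3.
rewrite /hfactor /lattice_weight mulnDr !(mulnC 2) (exprD q x y) (exprD q (x * 2) (y * 2)).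
rewrite !exprM -!mul_polyC E1 E2 !(rmorphD, rmorphB, rmorphM, rmorph1).
ring.
Qed.

Lemma hpoly_pair_step (e : F) (x y : nat) : denoms_neq0 x y ->
  hpoly q c x * hpoly q d y * hfactor q e (x + y) =
    lattice_weight e true x y *: (hpoly q c x.+1 * hpoly q d y)
    + lattice_weight e false x y *: (hpoly q c x * hpoly q d y.+1).
Proof. by move=> hxy; rewrite !hpolyS (hfactor_split e hxy) -!mul_polyC; ring. Qed.

End Splitting.

Section PathWeights.
Variable F : fieldType.

Lemma qz_nat (q : F) (m : nat) : qz q m%:Z = q ^+ m.
Proof. by rewrite /qz -exprnP. Qed.

Lemma qzD (q : F) (m n : nat) : qz q (m%:Z + n%:Z) = q ^+ m * q ^+ n.
Proof. by rewrite -PoszD qz_nat exprD. Qed.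

Lemma qzB (q : F) (m n : nat) : q != 0 -> qz q (m%:Z - n%:Z) = q ^+ m / q ^+ n.
Proof. by move=> hq; rewrite /qz expfzDr // -exprnN -exprnP. Qed.

Definition step_param (q a b : F) (k i : nat) : F :=
  if (i < k)%N then a else b / q ^+ k.

Lemma step_weightE (q a b c d : F) (k i : nat) (right : bool) (x y : nat) :
  q != 0 ->
  step_weight q a b c d k (i < k)%N right x y
  = lattice_weight q c d (step_param q a b k i) right x y.
Proof.
move=> hq; rewrite /step_weight /lattice_weight /split_weight /step_param /=.
rewrite -!PoszM -!PoszD !qzB // !qz_nat !(mulnC 2) (exprD q x (y * 2)).
rewrite (exprD q (x * 2) y) (exprD q x y) !exprM.
by case: right; case: (i < k)%N => //; congr (_ / _); ring.
Qed.

Lemma path_weight_rcons (q a b c d : F) (k n : nat) (p : n.-tuple bool) (r : bool) :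
  path_weight q a b c d k [tuple of rcons p r] =
  path_weight q a b c d k p *
    step_weight q a b c d k (n < k)%N r (count id p) (n - count id p).
Proof.
rewrite /path_weight big_ord_recr /=; congr (_ * _).
  apply: eq_bigr => i _.
  have -> : tnth [tuple of rcons p r] (widen_ord (leqnSn n) i) = tnth p i.
    by rewrite !(tnth_nth false) /= nth_rcons size_tuple ltn_ord.
  have Hx : step_x [tuple of rcons p r] (widen_ord (leqnSn n) i) = step_x p i.
    by rewrite /step_x /= -cats1 takel_cat // size_tuple ltnW.
  by rewrite /step_y Hx.
have -> : tnth [tuple of rcons p r] ord_max = r.
  by rewrite (tnth_nth false) /= nth_rcons size_tuple ltnn eqxx.
have Hx : step_x [tuple of rcons p r] n = count id p.
  by rewrite /step_x /= -cats1 takel_cat ?size_tuple // take_oversize // size_tuple.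
by rewrite /step_y Hx.
Qed.

End PathWeights.

Lemma rcons_tuple_bij (T : Type) (x0 : T) (n : nat) :
  bijective (fun u : T * n.-tuple T => [tuple of rcons u.2 u.1]).
Proof.
exists (fun t : n.+1.-tuple T => (last x0 t, [tuple of belast (thead t) (behead t)])).
  move=> [r p] /=; set t := [tuple of rcons p r].
  have Et : rcons p r = thead t :: behead t by exact: (congr1 val (tuple_eta t)).
  have := lastI (thead t) (behead t); rewrite -Et => /rcons_inj [Ep Er].
  by rewrite last_rcons; congr pair; apply: val_inj; rewrite /= -Ep.
move=> t; apply: val_inj => /=.
by rewrite [val t](congr1 val (tuple_eta t)) /= -lastI.
Qed.

Lemma count_tuple_leq (n : nat) (p : n.-tuple bool) : (count id p <= n)%N.
Proof. by rewrite -{2}(size_tuple p) count_size. Qed.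

Section Expansion.
Variables (F : fieldType) (q a b c d : F) (k : nat).
Hypotheses (hq : q != 0) (hc : c != 0) (hd : d != 0).

Lemma hpoly_prod_hfactor (N : nat) : (k <= N)%N ->
  hpoly q a k * hpoly q b (N - k) = \prod_(i < N) hfactor q (step_param q a b k i) i.
Proof.
move=> hk; set f := fun i => hfactor q (step_param q a b k i) i.
rewrite -(big_mkord xpredT f) (big_cat_nat (leq0n k) hk) /=; congr (_ * _).
  by rewrite /hpoly big_mkord; apply: eq_bigr => i _; rewrite /f /step_param ltn_ord.
rewrite -{2}(add0n k) big_addn /hpoly big_mkord; apply: eq_bigr => j _.
have hqk : q ^+ k != 0 by exact: expf_neq0.
rewrite /f /step_param ltnNge leq_addl /= /hfactor; congr (_ - _ *: _ + _%:P).
  by rewrite exprD; field.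
by rewrite mulnDr !(mulnC 2) (exprD q (j * 2) (k * 2)) !exprM; field.
Qed.

Lemma prod_hfactor_paths (n : nat) :
    (forall x y, (x + y < n)%N -> denoms_neq0 q c d x y) ->
  \prod_(i < n) hfactor q (step_param q a b k i) i =
  \sum_(p : n.-tuple bool) path_weight q a b c d k p *:
      (hpoly q c (count id p) * hpoly q d (n - count id p)).
Proof.
elim: n => [|n IHn] hD.
  rewrite big_ord0 (big_pred1 [tuple]); last by move=> t /=; apply/esym/eqP/tuple0.
  by rewrite /path_weight /hpoly !big_ord0 scale1r mulr1.
rewrite big_ord_recr /= IHn; last by move=> x y /ltnW /hD.
pose term (p : n.+1.-tuple bool) := path_weight q a b c d k p *:
  (hpoly q c (count id p) * hpoly q d (n.+1 - count id p)).
transitivity (\sum_(u : bool * n.-tuple bool) term [tuple of rcons u.2 u.1]); last first.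
  by rewrite (reindex _ (onW_bij _ (rcons_tuple_bij false n))).
rewrite -(pair_bigA _ (fun (r : bool) (p : n.-tuple bool) => term [tuple of rcons p r])).
rewrite big_bool /= -big_split.
rewrite mulr_suml; apply: eq_bigr => p _ /=.
have Exy : (count id p + (n - count id p))%N = n by rewrite subnKC ?count_tuple_leq.
have hxy : denoms_neq0 q c d (count id p) (n - count id p) by apply: hD; rewrite Exy.
have := hpoly_pair_step hq hc hd (step_param q a b k n) hxy.
rewrite Exy -scalerAl => ->.
rewrite /term /= scalerDr !scalerA !path_weight_rcons !step_weightE // -!cats1 !count_cat /=.
by rewrite !addn0 addn1 subSS subSn ?count_tuple_leq.
Qed.

Lemma path_sum_expansion (N : nat) :
  \sum_(p : N.-tuple bool) path_weight q a b c d k p *: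
      (hpoly q c (count id p) * hpoly q d (N - count id p))
  = expansion q c d N (path_sum q a b c d k N).
Proof.
rewrite /expansion /path_sum.
rewrite (partition_big (fun p : N.-tuple bool => inord (count id p) : 'I_N.+1) xpredT) //=.
apply: eq_bigr => j _; rewrite scaler_suml; apply: eq_big => p.
  by rewrite -val_eqE /= inordK ?ltnS ?count_tuple_leq.
by rewrite -val_eqE /= inordK ?ltnS ?count_tuple_leq // => /eqP ->.
Qed.

End Expansion.

Lemma expansionB (F : fieldType) (q c d : F) (N : nat) (r s : nat -> F) :
  expansion q c d N (fun l => r l - s l) = expansion q c d N r - expansion q c d N s.
Proof. by rewrite /expansion -sumrB; apply: eq_bigr => l _; rewrite scalerBl. Qed.

Theorem mainTheorem10 (F : fieldType) (q a b c d : F) (k l N : nat)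
    (hk : (k <= N)%N) (hl : (l <= N)%N)
    (hq : q != 0) (hc : c != 0) (hd : d != 0)
    (hden : forall x y : nat, (x + y < N)%N ->
       [/\ 1 - qz q (x%:Z + y%:Z) * c * d != 0,
           1 - qz q (x%:Z - y%:Z) * c / d != 0 &
           1 - qz q (y%:Z - x%:Z) * d / c != 0])
    (hind : forall r : nat -> F, expansion q c d N r = 0 ->
       forall j, (j <= N)%N -> r j = 0) :
  is_R_coeffs q a b c d k N (path_sum q a b c d k N) /\
  (forall r : nat -> F, is_R_coeffs q a b c d k N r ->
    r l = path_sum q a b c d k N l).
Proof.
have hD x y : (x + y < N)%N -> denoms_neq0 q c d x y.
  by move=> /hden; rewrite qzD !qzB.
have expandR : is_R_coeffs q a b c d k N (path_sum q a b c d k N).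
  rewrite /is_R_coeffs hpoly_prod_hfactor // (prod_hfactor_paths a b k hq hc hd hD).
  exact: path_sum_expansion.
split=> // r hr; apply/eqP; rewrite -subr_eq0; apply/eqP.
apply: (hind (fun l => r l - path_sum q a b c d k N l)) hl.
by rewrite expansionB -hr -expandR subrr.
Qed.
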